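(* Let $G\in\mathcal{C}$, let $H$ be a hole of $G$, let $v$ be a major vertex for $H$, let $u$ be a clone of $y$ in $H$, and suppose $uv\in E(G)$. If $yv\notin E(G)$, then $u$ and $v$ have a common neighbor in $H$.
   Context: All graphs are finite and simple; paths are induced paths; a hole is an induced cycle of length at least four. $\mathcal{C}$ is the class of graphs containing no theta, pyramid, prism or turtle as an induced subgraph, where: a theta consists of two nonadjacent vertices $a,b$ and three paths from $a$ to $b$, otherwise vertex-disjoint, any two of which induce a hole; a pyramid consists of a vertex $a$, a triangle $\{b_1,b_2,b_3\}$ and paths $P_i$ from $a$ to $b_i$, pairwise disjoint except at $a$, any two of which induce a hole; a prism consists of two disjoint triangles $\{a_1,a_2,a_3\},\{b_1,b_2,b_3\}$ and pairwise disjoint paths $P_i$ from $a_i$ to $b_i$, any two of which induce a hole; a turtle consists of disjoint paths $P_1$ (from $a_1$ to $b_1$), $P_2$ (from $a_2$ to $b_2$) with $a_1a_2,b_1b_2$ edges and $V(P_1)\cup V(P_2)$ inducing a hole, plus adjacent vertices $x,y$ where $x$ has at least three neighbors in $P_1$ and none in $P_2$, and $y$ has at least three neighbors in $P_2$ and none in $P_1$. For a hole $H$ and $u\notin V(H)$, $N_H(u)$ is the set of neighbors of $u$ in $H$. A vertex $u\notin V(H)$ is minor for $H$ if $N_H(u)\neq\emptyset$ and $N_H(u)$ is contained in the vertex set of some three-vertex subpath of $H$; it is major for $H$ if $N_H(u)\ne\emptyset$ and $u$ is not minor. A vertex $u\notin V(H)$ is a clone of $y\in V(H)$ if $N_H(u)=\{x,y,z\}$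 where $x\text{-}y\text{-}z$ is a subpath of $H$. *)

From mathcomp Require Import all_boot.
Set Implicit Arguments. Unset Strict Implicit. Unset Printing Implicit Defensive.

Section Graphs.
Variables (T : finType) (e : rel T).

Definition simple_graph := symmetric e /\ irreflexive e.

Definition ind_path_from (a b : T) (p : seq T) : Prop :=
  [/\ p != [::], head a p = a, last a p = b, uniq p &
      forall i j, i < size p -> j < size p ->
        e (nth a p i) (nth a p j) = (i == j.+1) || (j == i.+1)].

(* c lists the vertices of a hole (induced cycle, length >= 4) in cyclic order. *)
Definition is_hole (c : seq T) : Prop :=
  [/\ 4 <= size c, uniq c &
      forall x0 i j, i < size c -> j < size c ->
        e (nth x0 c i) (nth x0 c j) =
        (j == i.+1 %% size c) || (i == j.+1 %% size c)].

Definition induces_hole (s : seq T) : Prop :=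
  exists c, is_hole c /\ c =i s.

Definition triangle (x y z : T) := [&& e x y, e y z & e x z].

Definition meet_within (p q : seq T) (A : seq T) :=
  forall x, x \in p -> x \in q -> x \in A.

Definition has_theta : Prop :=
  exists a b P1 P2 P3,
    [/\ a != b, ~~ e a b,
        [/\ ind_path_from a b P1, ind_path_from a b P2 & ind_path_from a b P3],
        [/\ meet_within P1 P2 [:: a; b], meet_within P1 P3 [:: a; b]
          & meet_within P2 P3 [:: a; b]] &
        [/\ induces_hole (P1 ++ P2), induces_hole (P1 ++ P3)
          & induces_hole (P2 ++ P3)]].

Definition has_pyramid : Prop :=
  exists a b1 b2 b3 P1 P2 P3,
    [/\ triangle b1 b2 b3,
        [/\ ind_path_from a b1 P1, ind_path_from a b2 P2 & ind_path_from a b3 P3],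
        [/\ meet_within P1 P2 [:: a], meet_within P1 P3 [:: a]
          & meet_within P2 P3 [:: a]] &
        [/\ induces_hole (P1 ++ P2), induces_hole (P1 ++ P3)
          & induces_hole (P2 ++ P3)]].

Definition has_prism : Prop :=
  exists a1 a2 a3 b1 b2 b3 P1 P2 P3,
    [/\ [/\ triangle a1 a2 a3, triangle b1 b2 b3 &
        all (fun x => x \notin [:: b1; b2; b3]) [:: a1; a2; a3]],
        [/\ ind_path_from a1 b1 P1, ind_path_from a2 b2 P2 & ind_path_from a3 b3 P3],
        [/\ meet_within P1 P2 [::], meet_within P1 P3 [::]
          & meet_within P2 P3 [::]] &
        [/\ induces_hole (P1 ++ P2), induces_hole (P1 ++ P3)
          & induces_hole (P2 ++ P3)]].

Definition has_turtle : Prop :=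
  exists a1 b1 a2 b2 P1 P2 x y,
    [/\ [/\ ind_path_from a1 b1 P1, ind_path_from a2 b2 P2 & meet_within P1 P2 [::]],
        [/\ e a1 a2, e b1 b2 & induces_hole (P1 ++ P2)],
        [/\ e x y, x \notin P1 ++ P2 & y \notin P1 ++ P2] &
        [/\ 3 <= count (e x) P1, ~~ has (e x) P2,
            3 <= count (e y) P2 & ~~ has (e y) P1]].

Definition in_class_C : Prop :=
  [/\ ~ has_theta, ~ has_pyramid, ~ has_prism & ~ has_turtle].

Definition NH (c : seq T) (u : T) : {set T} := [set w | (w \in c) && e u w].

Definition subpath3 (c : seq T) (x y z : T) : Prop :=
  exists2 i, i < size c &
    [/\ x = nth x c i, y = nth x c (i.+1 %% size c) & z = nth x c (i.+2 %% size c)].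

Definition minor (c : seq T) (u : T) : Prop :=
  [/\ u \notin c, NH c u != set0 &
      exists x y z, subpath3 c x y z /\ NH c u \subset [set x; y; z]].

Definition major (c : seq T) (u : T) : Prop :=
  [/\ u \notin c, NH c u != set0 & ~ minor c u].

Definition clone (c : seq T) (u y : T) : Prop :=
  u \notin c /\ exists x z, subpath3 c x y z /\ NH c u = [set x; y; z].

End Graphs.

From mathcomp Require Import all_boot.
From mathcomp Require Import zify.
Set Implicit Arguments. Unset Strict Implicit. Unset Printing Implicit Defensive.

(* Lemma 2.3.  Let u be a clone of y on the hole H = x-y-z-..., so that N_H(u) is
   {x, y, z}, and let v be a major neighbour of u.  If v is adjacent to one of
   x, y, z, that vertex is a common neighbour of u and v.  Otherwise, listing H as x, y, z, Q, the
   neighbours of v on H all lie in Q, and we classify them: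
   - at least three: the arcs x-y-z and Q of H, with the edge uv, form a turtle;
   - exactly one, or two adjacent ones: they lie in three consecutive vertices
     of H, so v is minor, a contradiction;
   - exactly two nonadjacent ones a, b: the two arcs of H between a and b and the
     path a-v-b form a theta. *)

Section Hits.
Variables (A : eqType) (P : pred A).

Lemma split_last2 (s : seq A) : 2 <= size s -> exists W p q, s = W ++ [:: p; q].
Proof.
case/lastP: s => [|s q] //; case/lastP: s => [|W p] // _.
by exists W, p, q; rewrite -!cats1 -catA.
Qed.

Lemma filter_nohit s : ~~ has P s -> filter P s = [::].
Proof. by rewrite has_filter => /negbNE/eqP. Qed.

Lemma split_first_hit s : has P s ->
  exists X a Y, [/\ s = X ++ a :: Y, P a & ~~ has P X].
Proof.
elim: s => [|b s IHs] //= /orP [Pb|hit]; first by exists [::], b, s.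
case: (boolP (P b)) => Pb; first by exists [::], b, s.
have [X [a [Y [-> Pa noX]]]] := IHs hit.
by exists (b :: X), a, Y; rewrite /= negb_or Pb noX.
Qed.

Lemma hits_cases s : has P s ->
  [\/ 3 <= count P s,
      exists X a Y, s = X ++ a :: Y /\ filter P s = [:: a] |
      exists X a M b Y, s = X ++ a :: M ++ b :: Y /\ filter P s = [:: a; b]].
Proof.
move=> /split_first_hit [X [a [R [-> Pa noX]]]].
have filterXR : filter P (X ++ a :: R) = a :: filter P R.
  by rewrite filter_cat filter_nohit //= Pa.
case: (boolP (has P R)) => hitR; last first.
  by apply: Or32; exists X, a, R; rewrite filterXR filter_nohit.
have [M [b [Y [ER Pb noM]]]] := split_first_hit hitR; subst R.
case: (boolP (has P Y)) => hitY.
  apply: Or31; rewrite count_cat /= count_cat /= Pa Pb.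
  by move: hitY; rewrite has_count; lia.
by apply: Or33; exists X, a, M, b, Y; rewrite filterXR filter_cat filter_nohit //= Pb filter_nohit.
Qed.

End Hits.

Section Holes.
Variables (T : finType) (e : rel T).

Lemma modS1 n a : (a %% n).+1 %% n = a.+1 %% n.
Proof. by rewrite -addn1 modnDml addn1. Qed.

Lemma modS2 n a : (a %% n).+2 %% n = a.+2 %% n.
Proof. by rewrite -addn2 modnDml addn2. Qed.

Lemma mod_succ n a : a < n -> a.+1 %% n = (if a.+1 == n then 0 else a.+1).
Proof. by move=> lt_an; case: eqP => [->|ne]; rewrite ?modnn // modn_small; lia. Qed.

Lemma hole_adj c x0 i j : is_hole e c -> i < size c -> j < size c ->
  e (nth x0 c i) (nth x0 c j) = [|| j == i.+1, i == j.+1,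
     (i == 0) && (j.+1 == size c) | (j == 0) && (i.+1 == size c)].
Proof.
move=> [_ _ adj] lt_i lt_j; rewrite adj // !mod_succ //.
by case: ifP => /eqP ?; case: ifP => /eqP ?; lia.
Qed.

Lemma nth_rot x0 (s : seq T) k t : k <= size s -> t < size s ->
  nth x0 (rot k s) t = nth x0 s ((t + k) %% size s).
Proof.
move=> le_k lt_t; rewrite /rot nth_cat size_drop.
case: ltnP => h; first by rewrite nth_drop modn_small; [congr nth; lia | lia].
have -> : (t + k) %% size s = t - (size s - k).
  have -> : t + k = (t - (size s - k)) + size s by lia.
  by rewrite modnDr modn_small; lia.
by rewrite nth_take //; lia.
Qed.

Lemma rot_hole c k : is_hole e c -> is_hole e (rot k c).
Proof.
case: (leqP (size c) k) => hk; first by rewrite rot_oversize.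
move=> [h4 uc adj]; split; rewrite ?size_rot ?rot_uniq // => x0 i j lt_i lt_j.
rewrite !nth_rot; try lia.
rewrite adj; try (apply: ltn_pmod; lia).
(* both sides compare indices modulo size c, and adding k commutes with succ *)
have shift a b : a < size c ->
    ((a + k) %% size c == (b + k).+1 %% size c) = (a == b.+1 %% size c).
  move=> lt_a; apply/eqP/eqP => [E|->]; last by rewrite modnDml addSn.
  rewrite -(modn_small lt_a); apply/eqP.
  by rewrite -(eqn_modDr k) E addSn.
by rewrite !modS1 !shift.
Qed.

Lemma rot_sub3 (c : seq T) k p q r : subpath3 (rot k c) p q r -> subpath3 c p q r.
Proof.
case: (leqP (size c) k) => hk; first by rewrite rot_oversize.
case=> t; rewrite size_rot => lt_t [-> -> ->].
have lt_mod n : n %% size c < size c by apply: ltn_pmod; lia.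
exists ((t + k) %% size c) => //; rewrite !nth_rot //; try lia.
split; first by apply: set_nth_default.
  by rewrite modS1 modnDml addSn.
by rewrite modS2 modnDml !addSn.
Qed.

Lemma sub3_cat (X : seq T) p q r Y : subpath3 (X ++ [:: p, q, r & Y]) p q r.
Proof.
exists (size X); first by rewrite size_cat /=; lia.
rewrite !modn_small ?size_cat /=; try lia.
rewrite -[(size X).+2]addn2 -[(size X).+1]addn1 !nth_cat ltnn !ltnNge !leq_addr /=.
by rewrite subnn !addKn.
Qed.

Lemma subpath3_rot (c : seq T) x y z : 3 <= size c -> subpath3 c x y z ->
  exists k Q, rot k c = [:: x, y, z & Q].
Proof.
move=> ge3 [i lt_i [ex ey ez]]; exists i.
have nthi t : t < 3 -> nth x (rot i c) t = nth x c ((i + t) %% size c).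
  by move=> lt_t; rewrite nth_rot 1?addnC //; lia.
move: (nthi 0 isT) (nthi 1 isT) (nthi 2 isT) (size_rot i c).
rewrite addn0 addn1 addn2 modn_small // -ex -ey -ez.
case: (rot i c) => [|a0 [|a1 [|a2 Q]]] /= E0 E1 E2 sz; try lia.
by exists Q; rewrite -E0 -E1 -E2.
Qed.

Lemma NH_rot (c : seq T) k w : NH e (rot k c) w = NH e c w.
Proof. by apply/setP => t; rewrite !inE mem_rot. Qed.

Lemma major_rot (c : seq T) k v : major e c v -> major e (rot k c) v.
Proof.
move=> [vc nonempty not_minor]; split; rewrite ?mem_rot ?NH_rot //.
move=> [_ _ [p [q [r [sub3 sub]]]]]; apply: not_minor; split => //.
by exists p, q, r; split; [apply: rot_sub3 sub3 | rewrite -(NH_rot _ k)].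
Qed.

Lemma window_minor X p q r Y v : v \notin X ++ [:: p, q, r & Y] ->
  has (e v) (X ++ [:: p, q, r & Y]) ->
  {in X ++ [:: p, q, r & Y], forall w, e v w -> w \in [:: p; q; r]} ->
  minor e (X ++ [:: p, q, r & Y]) v.
Proof.
move=> vc /hasP [w wc evw] confined; split => //.
  by apply/set0Pn; exists w; rewrite inE wc.
exists p, q, r; split; first exact: sub3_cat.
apply/subsetP => t; rewrite inE => /andP [tc evt].
by move: (confined t tc evt); rewrite !inE orbA.
Qed.

Lemma hole_cons X a b Y : is_hole e (X ++ [:: a, b & Y]) -> e a b.
Proof.
move=> Hc; have [ge4 _ _] := Hc.
have Ea : a = nth a (X ++ [:: a, b & Y]) (size X) by rewrite nth_cat ltnn subnn.
have Eb : b = nth a (X ++ [:: a, b & Y]) (size X).+1.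
  by rewrite nth_cat ltnNge leqnSn /= subSn // subnn.
by rewrite [X in e X _]Ea [X in e _ X]Eb hole_adj // ?size_cat /=; lia.
Qed.

Lemma hole_ends a s : is_hole e (a :: s) -> e a (last a s).
Proof.
move=> Hc; have [ge4 _ _] := Hc.
have -> : last a s = nth a (a :: s) (size s).
  by rewrite -[size s]/((size (a :: s)).-1) nth_last.
by rewrite -[X in e X _]/(nth a (a :: s) 0) hole_adj //=; lia.
Qed.

Lemma hole_arc c X a p Y : is_hole e c -> c = X ++ a :: p ++ Y -> X ++ Y != [::] ->
  ind_path_from e a (last a p) (a :: p).
Proof.
move=> Hc Ec nXY; have [_ uc _] := Hc.
have u_arc : uniq (a :: p).
  by move: uc; rewrite Ec cat_uniq -cat_cons cat_uniq => /and3P [_ _ /andP []].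
split => // i j lt_i lt_j.
have nth_arc t : t < size (a :: p) -> nth a (a :: p) t = nth a c (size X + t).
  by move=> lt_t; rewrite Ec nth_cat ltnNge leq_addr /= addKn -cat_cons nth_cat lt_t.
have sz : size c = size X + (size p).+1 + size Y by rewrite Ec !size_cat /= size_cat; lia.
have szXY : 0 < size X + size Y by move: nXY; rewrite -size_eq0 size_cat lt0n.
by move: lt_i lt_j; rewrite /= => lt_i lt_j; rewrite !nth_arc // hole_adj ?sz //; lia.
Qed.

Lemma ind_path_rev (a b : T) p : ind_path_from e a b p -> ind_path_from e b a (rev p).
Proof.
case: p => [[]//|p0 p [_ /= <- <- up adj]].
split; rewrite ?rev_uniq //.
- by rewrite rev_cons; case: (rev p).
- by rewrite -nth0 nth_rev // subn1 nth_last.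
- by rewrite rev_cons last_rcons.
move=> i j; rewrite size_rev => lt_i lt_j.
rewrite !nth_rev // !(set_nth_default p0 (last p0 p)) ?adj; simpl in *; lia.
Qed.

Lemma ind_path_mem_ends a b p : ind_path_from e a b p -> a \in p /\ b \in p.
Proof. by case: p => [[]//|p0 p [_ /= -> <- _ _]]; rewrite mem_head mem_last. Qed.

Lemma ind_path_ends a b p : ind_path_from e a b p -> 3 <= size p -> a != b /\ ~~ e a b.
Proof.
move=> [_ Eh El up adj] ge3.
have Ea : a = nth a p 0 by rewrite nth0.
have Eb : b = nth a p (size p).-1 by rewrite nth_last.
have p_pos : 0 < size p by lia.
have lt_last : (size p).-1 < size p by lia.
by split; rewrite {1}Ea Eb ?nth_uniq ?adj //; lia.
Qed.

Lemma hole_two_arcs a b M N : is_hole e (a :: M ++ b :: N) -> M != [::] -> N != [::] ->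
  [/\ ind_path_from e a b (a :: M ++ [:: b]), ind_path_from e a b (rev (b :: N ++ [:: a]))
    & meet_within (a :: M ++ [:: b]) (rev (b :: N ++ [:: a])) [:: a; b]].
Proof.
move=> Hc nM nN; split.
- have := hole_arc (X := [::]) (a := a) (p := M ++ [:: b]) (Y := N) Hc.
  by rewrite last_cat /= -catA; apply.
- apply: ind_path_rev.
  have Hc' : is_hole e (b :: N ++ a :: M).
    have := rot_hole (size (a :: M)) Hc.
    by rewrite (_ : a :: M ++ b :: N = (a :: M) ++ b :: N) // rot_size_cat.
  have := hole_arc (X := [::]) (a := b) (p := N ++ [:: a]) (Y := M) Hc'.
  by rewrite last_cat /= -catA; apply.
move=> w w1 w2; rewrite !inE; case: (boolP (_ || _)) => // /norP [wa wb].
have wM : w \in M by move: w1; rewrite inE mem_cat inE (negPf wa) (negPf wb) orbF.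
have wN : w \in N by move: w2; rewrite mem_rev inE mem_cat inE (negPf wa) (negPf wb) orbF.
have [_ uc _] := Hc.
move: uc; rewrite cons_uniq cat_uniq => /andP [_ /and3P [_ /hasPn disjMN _]].
by have := disjMN w; rewrite inE wN orbT wM; apply.
Qed.

(* Decides membership goals between concatenations/reversals of the same pieces. *)
Local Ltac mem_tauto := rewrite ?(mem_cat, inE, mem_rev, in_cons);
  do ! case: (_ == _); do ! case: (_ \in _); by [].

Lemma split_hole_turtle P R s t : is_hole e (P ++ R) -> e s t ->
  s \notin P ++ R -> t \notin P ++ R ->
  3 <= count (e s) P -> ~~ has (e s) R -> 3 <= count (e t) R -> ~~ has (e t) P ->
  has_turtle e.
Proof.
case: P => [|p0 P] //; case: R => [|r0 R] // Hc est sc tc sP sR tR tP.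
have [_ uc _] := Hc.
exists p0, (last p0 P), (last r0 R), r0, (p0 :: P), (rev (r0 :: R)), s, t; split.
- split.
  + exact: (hole_arc (X := [::]) (Y := r0 :: R) Hc).
  + by apply: ind_path_rev; apply: (hole_arc (X := p0 :: P) (Y := [::]) Hc); rewrite cats0.
  + move=> w wP; rewrite mem_rev => wR.
    by move: uc; rewrite cat_uniq => /and3P [_ /hasPn /(_ w wR)]; rewrite wP.
- split.
  + by have := hole_ends Hc; rewrite last_cat.
  + by move: Hc; rewrite lastI cat_rcons; apply: hole_cons.
  + by exists ((p0 :: P) ++ r0 :: R); split => // w; mem_tauto.
- by split => //; move: sc tc; mem_tauto.
- by rewrite count_rev has_rev.
Qed.

Section SimpleGraph.
Hypotheses (sym : symmetric e) (irr : irreflexive e).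

Lemma close_path_hole v (a b : T) p : ind_path_from e a b p -> 3 <= size p ->
  v \notin p -> {in p, forall w, e v w = (w == a) || (w == b)} -> is_hole e (v :: p).
Proof.
move=> [pn Eh El up adj] ge3 vp ends.
split; [by rewrite /=; lia | by rewrite /= vp up |].
move=> x0 i j; rewrite /= => lt_i lt_j.
have p_pos : 0 < size p by lia.
have ends_idx t : t < size p -> e v (nth a p t) = (t == 0) || (t == (size p).-1).
  move=> lt_t; rewrite ends ?mem_nth //.
  rewrite -{2}Eh -nth0 nth_uniq //; try lia.
  by rewrite -El -nth_last nth_uniq //; rewrite ?ltn_predL; lia.
case: i lt_i => [|i] lt_i; case: j lt_j => [|j] lt_j /=.
- by rewrite irr modn_small //; lia.
- rewrite (set_nth_default a) ?ends_idx; try lia.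
  rewrite (modn_small (_ : 1 < _)) ?mod_succ; try lia.
  by case: ifP => /eqP ?; lia.
- rewrite sym (set_nth_default a) ?ends_idx; try lia.
  rewrite (modn_small (_ : 1 < _)) ?mod_succ; try lia.
  by case: ifP => /eqP ?; lia.
- rewrite !(set_nth_default a) ?adj ?mod_succ; try lia.
  by case: ifP => /eqP ?; case: ifP => /eqP ?; lia.
Qed.

Lemma apex_path a v b : a != b -> ~~ e a b -> a != v -> v != b -> e v a -> e v b ->
  ind_path_from e a b [:: a; v; b].
Proof.
move=> ne_ab nab ne_av ne_vb va vb; split => //.
  by rewrite /= !inE negb_or ne_ab ne_av ne_vb.
by move=> [|[|[|i]]] [|[|[|j]]] //= _ _;
  rewrite ?irr ?(sym a) ?(sym b) ?va ?vb ?(negPf nab).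
Qed.

Lemma two_neighbours_theta v a b M N : is_hole e (a :: M ++ b :: N) ->
  M != [::] -> N != [::] -> v \notin a :: M ++ b :: N ->
  {in a :: M ++ b :: N, forall w, e v w = (w == a) || (w == b)} -> has_theta e.
Proof.
set c := a :: M ++ b :: N => Hc nM nN vc nbrs.
set P1 := a :: M ++ [:: b]; set P2 := rev (b :: N ++ [:: a]).
have [path1 path2 meet12] := hole_two_arcs Hc nM nN.
have long1 : 3 <= size P1 by rewrite /P1 /= size_cat /= addn1 !ltnS lt0n size_eq0.
have long2 : 3 <= size P2 by rewrite /P2 size_rev /= size_cat /= addn1 !ltnS lt0n size_eq0.
have [ab nab] := ind_path_ends path1 long1.
have sub1 : {subset P1 <= c} by move=> w; rewrite /P1 /c; mem_tauto.
have sub2 : {subset P2 <= c} by move=> w; rewrite /P2 /c; mem_tauto.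
have vP1 : v \notin P1 by apply: contra vc; apply: sub1.
have vP2 : v \notin P2 by apply: contra vc; apply: sub2.
have av : a != v by apply: contraNneq vP1 => <-; rewrite mem_head.
have b1 : b \in P1 by rewrite /P1 !(inE, mem_cat) eqxx !orbT.
have vb : v != b by apply: contraNneq vP1 => ->.
have path3 : ind_path_from e a b [:: a; v; b].
  by apply: apex_path; rewrite // nbrs ?eqxx ?orbT // sub1 // mem_head.
have meet3 P : v \notin P -> meet_within P [:: a; v; b] [:: a; b].
  move=> vP w wP; rewrite !inE => /or3P [->|/eqP wv|->]; rewrite ?orbT //.
  by move: vP; rewrite -wv wP.
have closes P : ind_path_from e a b P -> 3 <= size P -> {subset P <= c} ->
    v \notin P -> induces_hole e (P ++ [:: a; v; b]).
  move=> pathP longP subP vP; exists (v :: P); split.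
    by apply: (close_path_hole pathP) => // w /subP; apply: nbrs.
  have [aP bP] := ind_path_mem_ends pathP.
  move=> w; rewrite inE mem_cat !inE.
  case: (w =P a) => [->|_]; first by rewrite aP !orbT.
  case: (w =P b) => [->|_]; first by rewrite bP !orbT.
  by rewrite /= orbF orbC.
exists a, b, P1, P2, [:: a; v; b]; split => //.
- by split; [exact: meet12 | exact: meet3 | exact: meet3].
split; [| exact: closes | exact: closes].
by exists c; split => // w; rewrite /c /P1 /P2; mem_tauto.
Qed.

Lemma far_major_neighbour x y z Q u v : is_hole e [:: x, y, z & Q] ->
  u \notin [:: x, y, z & Q] -> major e [:: x, y, z & Q] v ->
  all (e u) [:: x; y; z] -> ~~ has (e u) Q -> e u v -> ~~ has (e v) [:: x; y; z] ->
  has_theta e \/ has_turtle e.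
Proof.
set xyz := [:: x; y; z]; rewrite -[[:: x, y, z & Q]]/(xyz ++ Q).
move=> Hc uc [vc NHv not_minor] u_xyz uQ euv v_xyz.
have hitsQ : {in xyz ++ Q, forall w, e v w -> w \in filter (e v) Q}.
  move=> w; rewrite mem_cat mem_filter => /orP [w_xyz evw|-> ->] //.
  by move: (hasPn v_xyz w w_xyz); rewrite evw.
have hitQ : has (e v) Q.
  case/set0Pn: NHv => w; rewrite inE => /andP [wc evw].
  by have := hitsQ w wc evw; rewrite mem_filter => /andP [_ wQ]; apply/hasP; exists w.
case: (hits_cases hitQ) => [three | [X [a [Y [EQ hits]]]] | [X [a [M [b [Y [EQ hits]]]]]]].
- right; apply: (split_hole_turtle Hc euv) => //.
  by move: u_xyz => /and4P [/= -> -> -> _].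
- exfalso; apply: not_minor.
  have [W [p [q EW]]] := split_last2 (isT : 2 <= size (xyz ++ X)).
  have Ec : xyz ++ Q = W ++ [:: p, q, a & Y] by rewrite EQ catA EW -catA.
  rewrite Ec; apply: window_minor; rewrite -Ec ?has_cat ?hitQ ?orbT //.
  by move=> w wc /(hitsQ w wc); rewrite hits inE => /eqP ->; rewrite !inE eqxx !orbT.
have hit_a : e v a by move: (mem_head a [:: b]); rewrite -hits mem_filter => /andP [].
have hit_b : e v b by move: (mem_last a [:: b]); rewrite -hits mem_filter => /andP [].
have nbrs : {in xyz ++ Q, forall w, e v w = (w == a) || (w == b)}.
  move=> w wc; apply/idP/idP => [/(hitsQ w wc)|/orP [] /eqP ->] //.
  by rewrite hits !inE.
have [EM | nM] := eqVneq M [::].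
- exfalso; apply: not_minor; subst M.
  have Ec : xyz ++ Q = belast x [:: y, z & X] ++ [:: last x [:: y, z & X], a, b & Y].
    by rewrite -cat_rcons -lastI EQ catA.
  rewrite Ec; apply: window_minor; rewrite -Ec ?has_cat ?hitQ ?orbT //.
  by move=> w wc; rewrite nbrs // !inE => /orP [] ->; rewrite !orbT.
- have Erot : rot (size (xyz ++ X)) (xyz ++ Q) = a :: M ++ b :: Y ++ xyz ++ X.
    by rewrite EQ catA rot_size_cat /= -catA.
  left; apply: (@two_neighbours_theta v a b M (Y ++ xyz ++ X)); rewrite -?Erot ?mem_rot //.
  + exact: rot_hole.
  + by case: Y {EQ Erot}.
  + by move=> w; rewrite mem_rot; apply: nbrs.
Qed.

End SimpleGraph.
End Holes.

Theorem lemma2p3 (T : finType) (e : rel T) (c : seq T) (u v y : T) :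
  simple_graph e -> in_class_C e -> is_hole e c ->
  major e c v -> clone e c u y -> e u v -> ~~ e y v ->
  exists2 w, w \in c & e u w && e v w.
Proof.
move=> [sym irr] [no_theta _ _ no_turtle] Hc Hv [uc [x [z [sub3 NHu]]]] euv _.
have [ge4 _ _] := Hc.
have nbr_u w : (w \in c) && e u w = (w \in [:: x; y; z]).
  by move: (congr1 (fun S : {set T} => w \in S) NHu); rewrite !inE orbA.
case: (boolP (has (e v) [:: x; y; z])) => [/hasP [w w_xyz evw] | v_xyz].
  by move: (nbr_u w); rewrite w_xyz => /andP [wc euw]; exists w; rewrite ?euw.
have [k [Q Erot]] := subpath3_rot (ltnW ge4) sub3.
have mem_c w : (w \in c) = (w \in [:: x, y, z & Q]) by rewrite -Erot mem_rot.
have Hc' : is_hole e [:: x, y, z & Q] by rewrite -Erot; apply: rot_hole.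
have u_xyz : all (e u) [:: x; y; z].
  by apply/allP => w w_xyz; move: (nbr_u w); rewrite w_xyz => /andP [].
have uQ : ~~ has (e u) Q.
  have [_ uniq_c' _] := Hc'; move: uniq_c'.
  rewrite -[[:: x, y, z & Q]]/([:: x; y; z] ++ Q) cat_uniq => /and3P [_ disj _].
  apply/hasPn => w wQ; apply/negP => euw; apply/negP: (hasPn disj w wQ).
  by rewrite -nbr_u euw mem_c -[[:: x, y, z & Q]]/([:: x; y; z] ++ Q) mem_cat wQ orbT.
have uc' : u \notin [:: x, y, z & Q] by rewrite -mem_c.
have Hv' : major e [:: x, y, z & Q] v by rewrite -Erot; apply: major_rot.
by case: (far_major_neighbour sym irr Hc' uc' Hv' u_xyz uQ euv v_xyz) => [/no_theta|/no_turtle].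
Qed.
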